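(* Let $k$ be a positive integer, $a\ge k+2$ an integer and $G=K_a\,\square\,K_a$. Then $\gamma_{P,k}(G-v)=a-k-1$ for every vertex $v$ of $G$.
   Context: $K_a$ is the complete graph on $a$ vertices, $\square$ denotes the Cartesian product of graphs, and $G-v$ is obtained by deleting $v$ and its incident edges. $N_G[v]$ is the closed neighbourhood of $v$, and $N_G[S]$ the union of closed neighbourhoods of vertices of $S$. For $S\subseteq V(G)$, define $\mathcal{P}^{0}_{G,k}(S)=N_G[S]$ and $\mathcal{P}^{i+1}_{G,k}(S)=\bigcup\{N_G[v] : v\in \mathcal{P}^{i}_{G,k}(S),\ |N_G[v]\setminus \mathcal{P}^{i}_{G,k}(S)|\le k\}$; these increase and stabilize to $\mathcal{P}^{\infty}_{G,k}(S)$. $S$ is a $k$-power dominating set if $\mathcal{P}^{\infty}_{G,k}(S)=V(G)$; $\gamma_{P,k}(G)$ is the minimum size of such a set. *)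

From mathcomp Require Import all_boot.
Set Implicit Arguments. Unset Strict Implicit. Unset Printing Implicit Defensive.

Section PowerDom.
Variables (T : finType) (e : rel T).

Definition cnbhd (v : T) : {set T} := [set u | (u == v) || e v u].

Definition cnbhdS (S : {set T}) : {set T} := \bigcup_(v in S) cnbhd v.

Definition pd_step (k : nat) (P : {set T}) : {set T} :=
  \bigcup_(v in P | #|cnbhd v :\: P| <= k) cnbhd v.

Definition pd_iter (k : nat) (S : {set T}) (i : nat) : {set T} :=
  iter i (pd_step k) (cnbhdS S).

(* S is k-power dominating: P^infty(S) = V(G); since the P^i increase and
   stabilise, this means some P^i is the whole vertex set. *)
Definition k_power_dominating (k : nat) (S : {set T}) : Prop :=
  exists i, pd_iter k S i = [set: T].

Definition gammaPk_is (k n : nat) : Prop :=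
  (exists S : {set T}, k_power_dominating k S /\ #|S| = n) /\
  (forall S : {set T}, k_power_dominating k S -> n <= #|S|).
End PowerDom.

Definition rook_adj (a : nat) : rel ('I_a * 'I_a) :=
  fun x y => ((x.1 == y.1) && (x.2 != y.2)) || ((x.2 == y.2) && (x.1 != y.1)).

(* G - v : induced subgraph on the vertex type {x | x != v} *)
Definition del_vertex_adj (T : finType) (e : rel T) (v : T)
  : rel {x : T | x != v} := fun x y => e (val x) (val y).
Arguments del_vertex_adj {T} e v.

From mathcomp Require Import all_boot zify.
Set Implicit Arguments. Unset Strict Implicit. Unset Printing Implicit Defensive.

(* In G - v the closed neighbourhood of a vertex is the union of its row and
   its column, so N[S] is the cross of the rows R and columns C met by S.  A
   vertex of the cross lying in R x C sees nothing new, while one in a row of R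
   but a column outside C sees the rest of its column: |~R| vertices, or
   |~R| - 1 in the column of v when the row of v is outside R.
   If |S| < a - k - 1 then |~R|, |~C| >= k + 2, so the cross is closed under
   propagation and S never observes everything.  Conversely a - k - 1
   vertices with distinct rows and columns, all distinct from those of v, give
   |~R| = |~C| = k + 1: the first step fills the column of v, after which
   every row sees at most k unobserved vertices, and the second step finishes. *)

Section PowerDomination.
Variables (T : finType) (e : rel T) (k : nat).

Lemma mem_pd_step (P Q : {set T}) (u x : T) :
  Q \subset P -> u \in Q -> #|cnbhd e u :\: Q| <= k -> x \in cnbhd e u ->
  x \in pd_step e k P.
Proof.
move=> QP uQ uk ux; apply/bigcupP; exists u => //.
rewrite (subsetP QP) //=; apply: leq_trans uk.
exact/subset_leq_card/setDS.
Qed.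

Definition pd_closed (Q : {set T}) :=
  forall u, u \in Q -> #|cnbhd e u :\: Q| <= k -> cnbhd e u \subset Q.

Lemma pd_step_sub (P Q : {set T}) :
  pd_closed Q -> P \subset Q -> pd_step e k P \subset Q.
Proof.
move=> clQ PQ; apply/bigcupsP => u /andP[uP uk].
apply: clQ; first exact: subsetP PQ u uP.
exact: leq_trans (subset_leq_card (setDS _ PQ)) uk.
Qed.

Lemma not_k_power_dominating (S Q : {set T}) :
  pd_closed Q -> Q != setT -> cnbhdS e S \subset Q -> ~ k_power_dominating e k S.
Proof.
move=> clQ QT SQ [i iT]; move: QT; rewrite -subTset -iT.
suff -> : forall n, pd_iter e k S n \subset Q by [].
by elim=> [|n IH] //=; apply: pd_step_sub.
Qed.

End PowerDomination.

Lemma card_setC_ord n (A : {set 'I_n}) : #|~: A| = n - #|A|.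
Proof. by have := cardsC A; rewrite card_ord; lia. Qed.

Lemma card_setD1_if (T : finType) (A : {set T}) (b : bool) (y : T) :
  #|[set x in A | ~~ b || (x != y)]| = #|A| - (b && (y \in A)).
Proof.
case: b => /=; last by rewrite subn0; apply: eq_card => x; rewrite inE andbT.
have -> : [set x in A | x != y] = A :\ y by apply/setP => x; rewrite !inE andbC.
by rewrite (cardsD1 y A); case: (y \in A) => /=; lia.
Qed.

Section RookMinusVertex.
Variables (a : nat) (v : 'I_a * 'I_a).
Local Notation V := {x : 'I_a * 'I_a | x != v}.
Local Notation e := (del_vertex_adj (@rook_adj a) v).

Lemma in_cnbhd_rook (u x : V) :
  (x \in cnbhd e u) = ((val x).1 == (val u).1) || ((val x).2 == (val u).2).
Proof.
case: x => [[x1 x2] hx]; case: u => [[u1 u2] hu].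
rewrite inE /del_vertex_adj /rook_adj -val_eqE /= xpair_eqE (eq_sym u1) (eq_sym u2).
by case: (x1 == u1); case: (x2 == u2).
Qed.

Definition rows (S : {set V}) : {set 'I_a} := [set (val s).1 | s in S].
Definition cols (S : {set V}) : {set 'I_a} := [set (val s).2 | s in S].

Definition cross (R C : {set 'I_a}) : {set V} :=
  [set x : V | ((val x).1 \in R) || ((val x).2 \in C)].

Lemma cnbhdS_cross (S : {set V}) : cnbhdS e S = cross (rows S) (cols S).
Proof.
apply/setP => x; rewrite [in RHS]inE; apply/bigcupP/orP => [[s sS]|].
  by rewrite in_cnbhd_rook => /orP[]/eqP->; [left | right]; apply: imset_f.
by case=> /imsetP[s sS xs]; exists s; rewrite ?in_cnbhd_rook ?xs ?eqxx ?orbT.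
Qed.

Lemma cnbhd_sub_cross (R C : {set 'I_a}) (u : V) :
  (val u).1 \in R -> (val u).2 \in C -> cnbhd e u \subset cross R C.
Proof.
move=> uR uC; apply/subsetP => x; rewrite in_cnbhd_rook inE.
by case/orP=> /eqP->; rewrite ?uR ?uC ?orbT.
Qed.

Definition col_out (R : {set 'I_a}) (c : 'I_a) : {set V} :=
  [set x : V | ((val x).2 == c) && ((val x).1 \notin R)].
Definition row_out (C : {set 'I_a}) (r : 'I_a) : {set V} :=
  [set x : V | ((val x).1 == r) && ((val x).2 \notin C)].

Lemma cnbhdD_cross_col (R C : {set 'I_a}) (u : V) :
  (val u).1 \in R -> (val u).2 \notin C ->
  cnbhd e u :\: cross R C = col_out R (val u).2.
Proof.
move=> uR uC; apply/setP => x; rewrite in_setD in_cnbhd_rook !inE negb_or.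
rewrite andbC; case: (eqVneq (val x).1 (val u).1) => [->|_] /=; first by rewrite uR andbF.
by case: eqP => [->|//]; rewrite uC andbT.
Qed.

Lemma cnbhdD_cross_row (R C : {set 'I_a}) (u : V) :
  (val u).2 \in C -> (val u).1 \notin R ->
  cnbhd e u :\: cross R C = row_out C (val u).1.
Proof.
move=> uC uR; apply/setP => x; rewrite in_setD in_cnbhd_rook !inE negb_or.
rewrite andbC; case: (eqVneq (val x).2 (val u).2) => [->|_]; first by rewrite uC /= !andbF.
by rewrite orbF; case: eqP => [->|//]; rewrite uR.
Qed.

Lemma pair_eq_v (i j : 'I_a) : ((i, j) == v) = (i == v.1) && (j == v.2).
Proof. by case: v. Qed.

Lemma card_col_out (R : {set 'I_a}) (c : 'I_a) :
  #|col_out R c| = #|~: R| - ((c == v.2) && (v.1 \in ~: R)).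
Proof.
have inj : {in col_out R c &, injective (fun x : V => (val x).1)}.
  move=> x y; rewrite !inE => /andP[/eqP xc _] /andP[/eqP yc _] xy.
  by apply: val_inj; move: xy xc yc; case: (val x) (val y) => [x1 x2] [y1 y2] /= -> -> ->.
rewrite -(card_in_imset inj) -card_setD1_if; apply: eq_card => i.
rewrite !inE; apply/imsetP/andP => [[x] | [iR icv]].
  rewrite inE => /andP[/eqP xc xR] ->; split=> //.
  by rewrite -xc orbC -negb_and -pair_eq_v -surjective_pairing; exact: valP x.
have icv' : (i, c) != v by rewrite pair_eq_v negb_and orbC.
by exists (exist _ (i, c) icv'); rewrite // inE /= eqxx.
Qed.

Lemma card_row_out (C : {set 'I_a}) (r : 'I_a) :
  #|row_out C r| = #|~: C| - ((r == v.1) && (v.2 \in ~: C)).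
Proof.
have inj : {in row_out C r &, injective (fun x : V => (val x).2)}.
  move=> x y; rewrite !inE => /andP[/eqP xr _] /andP[/eqP yr _] xy.
  by apply: val_inj; move: xy xr yr; case: (val x) (val y) => [x1 x2] [y1 y2] /= -> -> ->.
rewrite -(card_in_imset inj) -card_setD1_if; apply: eq_card => j.
rewrite !inE; apply/imsetP/andP => [[x] | [jC rjv]].
  rewrite inE => /andP[/eqP xr xC] ->; split=> //.
  by rewrite -xr -negb_and -pair_eq_v -surjective_pairing; exact: valP x.
have rjv' : (r, j) != v by rewrite pair_eq_v negb_and.
by exists (exist _ (r, j) rjv'); rewrite // inE /= eqxx.
Qed.

Lemma cross_pd_closed k (R C : {set 'I_a}) :
  k.+2 <= #|~: R| -> k.+2 <= #|~: C| -> pd_closed e k (cross R C).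
Proof.
move=> kR kC u; rewrite inE.
case uR: ((val u).1 \in R); case uC: ((val u).2 \in C) => // _ uk.
- exact: cnbhd_sub_cross.
- move: uk; rewrite cnbhdD_cross_col ?uC // card_col_out.
  by have := leq_b1 (((val u).2 == v.2) && (v.1 \in ~: R)); lia.
- move: uk; rewrite cnbhdD_cross_row ?uR // card_row_out.
  by have := leq_b1 (((val u).1 == v.1) && (v.2 \in ~: C)); lia.
Qed.

Lemma cross_proper (R C : {set 'I_a}) :
  1 < #|~: R| -> 0 < #|~: C| -> cross R C != setT.
Proof.
move=> R2 C1.
have /set0Pn[i] : ~: R :\ v.1 != set0.
  move: R2; rewrite -card_gt0 (cardsD1 v.1).
  by case: (_ \in _); [rewrite add1n ltnS | rewrite add0n; apply: ltnW].
have /set0Pn[j] : ~: C != set0 by rewrite -card_gt0.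
rewrite !inE => jC /andP[iv iR].
have ijv : (i, j) != v by rewrite pair_eq_v negb_and iv.
by apply/eqP => /setP /(_ (exist _ (i, j) ijv)); rewrite !inE /= (negbTE iR) (negbTE jC).
Qed.

Lemma card_k_power_dominating k (S : {set V}) :
  k_power_dominating e k S -> a <= #|S| + k.+1.
Proof.
move=> dom; rewrite leqNgt; apply/negP => small.
have coS (A : {set 'I_a}) : #|A| <= #|S| -> k.+2 <= #|~: A|.
  by rewrite card_setC_ord; lia.
have kR : k.+2 <= #|~: rows S| by apply/coS/leq_imset_card.
have kC : k.+2 <= #|~: cols S| by apply/coS/leq_imset_card.
apply: (not_k_power_dominating (cross_pd_closed kR kC) _ _ dom).
  by apply: cross_proper; lia.
by rewrite cnbhdS_cross.
Qed.

Lemma mem_pd_step_cross k (P : {set V}) (R C : {set 'I_a}) (u x : V) :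
  cross R C \subset P -> (val u).1 \in R -> (val u).2 \in C -> x \in cnbhd e u ->
  x \in pd_step e k P.
Proof.
move=> CP uR uC; apply: mem_pd_step CP _ _; first by rewrite inE uR.
by move: (cnbhd_sub_cross uR uC); rewrite -setD_eq0 => /eqP->; rewrite cards0.
Qed.

Lemma cross_setU1_sub_pd_step k (R C : {set 'I_a}) (r0 c0 : 'I_a) :
  r0 \in R -> c0 \in C -> v.1 \notin R -> v.2 \notin C -> #|~: R| <= k.+1 ->
  cross R (v.2 |: C) \subset pd_step e k (cross R C).
Proof.
move=> r0R c0C vR vC kR; apply/subsetP => x.
have c0v : ((val x).1, c0) != v.
  by rewrite pair_eq_v negb_and orbC; apply/orP; left; apply: contraNneq vC => <-.
have r0v : (r0, (val x).2) != v.
  by rewrite pair_eq_v negb_and; apply/orP; left; apply: contraNneq vR => <-.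
pose u_row : V := exist (fun y => y != v) _ c0v.
pose u_col : V := exist (fun y => y != v) _ r0v.
have x_row : x \in cnbhd e u_row by rewrite in_cnbhd_rook eqxx.
have x_col : x \in cnbhd e u_col by rewrite in_cnbhd_rook eqxx orbT.
rewrite !inE => /orP[xR | /orP[/eqP xv | xC]].
- exact: (mem_pd_step_cross k (u := u_row)) (subxx _) xR c0C x_row.
- apply: mem_pd_step (subxx _) _ _ x_col; first by rewrite inE r0R.
  rewrite cnbhdD_cross_col //= ?xv ?card_col_out ?eqxx ?inE ?vR //=.
  by rewrite leq_subLR add1n.
- exact: (mem_pd_step_cross k (u := u_col)) (subxx _) r0R xC x_col.
Qed.

Lemma pd_step_cross_eq_setT k (P : {set V}) (R C : {set 'I_a}) (c0 : 'I_a) :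
  cross R C \subset P -> c0 \in C -> c0 != v.2 -> #|~: C| <= k ->
  pd_step e k P = setT.
Proof.
move=> CP c0C c0v kC; apply/eqP; rewrite -subTset; apply/subsetP => x _.
have uv : ((val x).1, c0) != v by rewrite pair_eq_v negb_and c0v orbT.
pose u : V := exist (fun y => y != v) _ uv.
have x_u : x \in cnbhd e u by rewrite in_cnbhd_rook eqxx.
case xR: ((val x).1 \in R); first exact: (mem_pd_step_cross k (u := u)) CP xR c0C x_u.
apply: mem_pd_step CP _ _ x_u; first by rewrite inE c0C orbT.
rewrite cnbhdD_cross_row ?xR //= card_row_out.
exact: leq_trans (leq_subr _ _) kC.
Qed.

Lemma k_power_dominating_transversal k (S : {set V}) :
  S != set0 -> v.1 \notin rows S -> v.2 \notin cols S ->
  #|~: rows S| <= k.+1 -> #|~: cols S| <= k.+1 -> k_power_dominating e k S.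
Proof.
move=> /set0Pn[s0 s0S] vR vC kR kC.
have c0C : (val s0).2 \in cols S by apply: imset_f.
exists 2; apply: (@pd_step_cross_eq_setT k _ (rows S) (v.2 |: cols S) (val s0).2).
- rewrite /pd_iter /= cnbhdS_cross.
  exact: cross_setU1_sub_pd_step (imset_f _ s0S) c0C vR vC kR.
- by rewrite !inE c0C orbT.
- by apply: contraNneq vC => <-.
- by move: kC; rewrite !card_setC_ord cardsU1 vC /=; lia.
Qed.

Lemma exists_transversal m : m < a ->
  exists S : {set V}, [/\ #|S| = m, #|rows S| = m, #|cols S| = m,
                         v.1 \notin rows S & v.2 \notin cols S].
Proof.
move=> ma; have le_m : m <= a.-1 by rewrite -ltnS prednK // (leq_ltn_trans _ ma).
pose w (t : 'I_m) := widen_ord le_m t.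
have w_inj : injective w by move=> t1 t2 /(congr1 val) E; apply: val_inj.
have dv t : (lift v.1 (w t), lift v.2 (w t)) != v.
  by rewrite pair_eq_v negb_and eq_sym neq_lift.
pose S : {set V} := [set exist (fun x => x != v) _ (dv t) | t : 'I_m].
have rowsS : rows S = [set lift v.1 (w t) | t : 'I_m] by rewrite /rows -imset_comp.
have colsS : cols S = [set lift v.2 (w t) | t : 'I_m] by rewrite /cols -imset_comp.
exists S; split.
- rewrite card_imset ?card_ord // => t1 t2 /(congr1 (fun x : V => (val x).1)).
  by move=> /lift_inj /w_inj.
- by rewrite rowsS card_imset ?card_ord // => t1 t2 /lift_inj /w_inj.
- by rewrite colsS card_imset ?card_ord // => t1 t2 /lift_inj /w_inj.
- by rewrite rowsS; apply/imsetP => -[t _ /eqP]; rewrite (negbTE (neq_lift _ _)).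
- by rewrite colsS; apply/imsetP => -[t _ /eqP]; rewrite (negbTE (neq_lift _ _)).
Qed.

End RookMinusVertex.

Theorem mainTheorem6 (k a : nat) (hk : 0 < k) (ha : k + 2 <= a)
  (v : 'I_a * 'I_a) :
  gammaPk_is (del_vertex_adj (@rook_adj a) v) k (a - k - 1).
Proof.
split; last by move=> S /card_k_power_dominating; rewrite -subnDA leq_subLR addn1 addnC.
have [|S [cardS cardR cardC vR vC]] := exists_transversal v (m := a - k - 1); first lia.
exists S; split=> //; apply: k_power_dominating_transversal => //.
- by rewrite -card_gt0 cardS; lia.
- by rewrite card_setC_ord cardR; lia.
- by rewrite card_setC_ord cardC; lia.
Qed.
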